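(* Let $f:\mathbb{Z}^n\to\mathbb{Z}\cup\{+\infty\}$ be an integer-valued M-convex function with bounded $\operatorname{dom} f$ and $x_0\in\operatorname{dom} f$. If algorithm M-LSD2 started at $x_0$ performs exactly $k$ calls of M-IncSlope before terminating, then $\tfrac12 k^2\le f(x_0)-\min\{f(x): x\in\operatorname{dom} f\}$; hence $k\le\sqrt{2\,(f(x_0)-\min f)}$.
   Context: $N=\{1,\dots,n\}$; $\chi_i\in\{0,1\}^n$ is the $i$-th unit vector. For $f:\mathbb{Z}^n\to\mathbb{R}\cup\{+\infty\}$, $\operatorname{dom} f=\{x\in\mathbb{Z}^n: f(x)<+\infty\}$. $f$ is M-convex if $\operatorname{dom} f\neq\emptyset$ and for all $x,y\in\operatorname{dom} f$ and every $i$ with $x(i)>y(i)$ there is $j$ with $x(j)<y(j)$ such that $f(x)+f(y)\ge f(x-\chi_i+\chi_j)+f(y+\chi_i-\chi_j)$. For $x\in\operatorname{dom} f$ and $i,j\in N$, $f'(x;i,j)=f(x+\chi_i-\chi_j)-f(x)$ (possibly $+\infty$; $f'(x;i,i)=0$), and $\phi(x)=\min_{i,j\in N}f'(x;i,j)$. Step length: $\bar c(y;i,j)=\max\{\lambda\in\mathbb{Z}_{\ge 0}: f(y+\lambda(\chi_i-\chi_j))-f(y)=\lambda f'(y;i,j)\}$. Procedure M-IncSlope$(x)$ (for $\phi(x)<0$): set $y:=x$; for each $i\in N$ (each once, arbitrary order) and for each $j\in N\setminus\{i\}$ (each once, arbitrary order), if $f'(y;i,j)=\phi(x)$ replace $y$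 by $y+\bar c(y;i,j)(\chi_i-\chi_j)$; output $y$. Algorithm M-LSD2: $x:=x_0$; while $\phi(x)<0$, replace $x$ by the output of M-IncSlope$(x)$; output $x$ once $\phi(x)=0$. *)

From mathcomp Require Import all_boot all_order all_algebra.
Set Implicit Arguments. Unset Strict Implicit. Unset Printing Implicit Defensive.
Import Order.TTheory GRing.Theory Num.Theory.
Local Open Scope ring_scope.

(* Points of Z^n are finite functions 'I_n -> int (extensional equality).
   Values of f live in Z ∪ {+oo}, encoded as option int (None = +oo). *)
Definition vec (n : nat) := {ffun 'I_n -> int}.
Definition efun (n : nat) := vec n -> option int.

Section MLSD.
Variables (n : nat) (f : efun n).

Definition in_dom (x : vec n) : Prop := f x <> None.

Definition chi (i : 'I_n) : vec n := [ffun k => ((k == i) : nat)%:Z].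

Definition shift (x : vec n) (i j : 'I_n) (lam : int) : vec n :=
  [ffun k => x k + lam * (chi i k - chi j k)].

Definition bounded_dom : Prop :=
  exists B : int, forall x, in_dom x -> forall k, `|x k| <= B.

Definition M_convex : Prop :=
  (exists x, in_dom x) /\
  forall x y, in_dom x -> in_dom y -> forall i, x i > y i ->
    exists j, x j < y j /\
      exists fx fy a b, f x = Some fx /\ f y = Some fy /\
        f (shift x j i 1) = Some a /\ f (shift y i j 1) = Some b /\
        fx + fy >= a + b.
(* note: shift x j i 1 = x - chi_i + chi_j, shift y i j 1 = y + chi_i - chi_j;
   the inequality f(x)+f(y) >= (possibly +oo) forces both values finite. *)

Definition fder (x : vec n) (i j : 'I_n) : option int :=
  match f (shift x i j 1), f x with
  | Some a, Some b => Some (a - b)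
  | _, _ => None
  end.

(* phi(x) = min_{i,j} f'(x;i,j).  For x in dom, f'(x;i,i) = 0 is among
   the values, so +oo values (mapped to 0 here) never affect the minimum. *)
Definition phi (x : vec n) : int :=
  \big[Order.min/0]_(i : 'I_n) \big[Order.min/0]_(j : 'I_n)
     (match fder x i j with Some v => v | None => 0 end).

Definition step_ok (y : vec n) (i j : 'I_n) (lam : int) : Prop :=
  exists fy d, f y = Some fy /\ fder y i j = Some d /\
    f (shift y i j lam) = Some (fy + lam * d).

Definition is_cbar (y : vec n) (i j : 'I_n) (c : int) : Prop :=
  0 <= c /\ step_ok y i j c /\ (forall lam, 0 <= lam -> step_ok y i j lam -> lam <= c).

Fixpoint inner_run (ph : int) (i : 'I_n) (js : seq 'I_n) (y y' : vec n) : Prop :=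
  match js with
  | [::] => y' = y
  | j :: js' => exists y1,
      (if fder y i j == Some ph
       then exists c, is_cbar y i j c /\ y1 = shift y i j c
       else y1 = y) /\ inner_run ph i js' y1 y'
  end.

Fixpoint outer_run (ph : int) (ord : seq 'I_n) (js : 'I_n -> seq 'I_n)
    (y y' : vec n) : Prop :=
  match ord with
  | [::] => y' = y
  | i :: is' => exists y1, inner_run ph i (js i) y y1 /\ outer_run ph is' js y1 y'
  end.

Definition M_IncSlope (x y : vec n) : Prop :=
  exists (ord : seq 'I_n) (js : 'I_n -> seq 'I_n),
    perm_eq ord (enum 'I_n) /\
    (forall i, perm_eq (js i) [seq j <- enum 'I_n | j != i]) /\
    outer_run (phi x) ord js x y.

Definition LSD2_run (x0 : vec n) (k : nat) : Prop :=
  exists xs : nat -> vec n,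
    xs 0%N = x0 /\
    (forall t, (t < k)%N -> phi (xs t) < 0 /\ M_IncSlope (xs t) (xs t.+1)) /\
    phi (xs k) = 0.

End MLSD.

From mathcomp Require Import all_boot all_order all_algebra.
From mathcomp Require Import zify ring lra.
Import Order.TTheory GRing.Theory Num.Theory.
Local Open Scope ring_scope.
Set Implicit Arguments. Unset Strict Implicit.

(* Let al = phi(x) < 0 when M-IncSlope(x) is called.  The exchange axiom shows
   that a unit move of slope al along (i,j) keeps all slopes >= al, and that a
   pair (a,b) can regain slope al only if (a,b) or, for a != i, (a,j) had slope
   al before the move.  Every pair is inspected in turn and left with slope > al,
   so phi rises by at least one per call; and since x has a pair of slope al, at
   least one move is made, lowering f by at least |al|.  As phi(x_k) = 0, this
   gives phi(x_t) <= t - k and f(x_0) - f(x_k) >= 1 + ... + k >= k^2/2.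
   Finally phi(x_k) = 0 makes x_k a global minimiser: by the exchange axiom,
   any other point of dom f can be moved towards x_k without increasing f. *)

Definition exchange_axiom n (f : efun n) : Prop :=
  forall x y, in_dom f x -> in_dom f y -> forall i, x i > y i ->
    exists j, x j < y j /\
      exists fx fy a b, f x = Some fx /\ f y = Some fy /\
        f (shift x j i 1) = Some a /\ f (shift y i j 1) = Some b /\
        fx + fy >= a + b.

Lemma M_convex_exchange n (f : efun n) : M_convex f -> exchange_axiom f.
Proof. by case. Qed.

Section Slopes.
Variables (n : nat) (f : efun n).

Lemma shiftE (x : vec n) i j l k :
  shift x i j l k = x k + l * ((k == i)%:Z - (k == j)%:Z).
Proof. by rewrite /shift /chi !ffunE. Qed.

Lemma shiftD (x : vec n) i j a b :
  shift (shift x i j a) i j b = shift x i j (a + b).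
Proof. by apply/ffunP => k; rewrite !shiftE; ring. Qed.

Lemma shift0 (x : vec n) i j : shift x i j 0 = x.
Proof. by apply/ffunP => k; rewrite !shiftE; ring. Qed.

Lemma shiftii (x : vec n) i l : shift x i i l = x.
Proof. by apply/ffunP => k; rewrite !shiftE; ring. Qed.

Lemma fderE (x : vec n) i j a b :
  f x = Some a -> f (shift x i j 1) = Some b -> fder f x i j = Some (b - a).
Proof. by rewrite /fder => -> ->. Qed.

Lemma fder_Some (x : vec n) i j d : fder f x i j = Some d ->
  exists a, f x = Some a /\ f (shift x i j 1) = Some (a + d).
Proof.
rewrite /fder; case: (f (shift x i j 1)) => [b|] //; case: (f x) => [a|] // [<-].
by exists a; split => //; congr Some; ring.
Qed.

Lemma fderii (x : vec n) i a : f x = Some a -> fder f x i i = Some 0.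
Proof. by move=> Ex; rewrite /fder shiftii Ex subrr. Qed.

Definition slope_lb (al : int) (y : vec n) : Prop :=
  forall a b v, fder f y a b = Some v -> al <= v.

Lemma phi_geP (al : int) (y : vec n) : al <= 0 -> al <= phi f y <-> slope_lb al y.
Proof.
move=> al_le0; split.
  move=> al_le a b v Dv; apply: (le_trans al_le); rewrite /phi.
  apply: le_trans; first exact: (bigmin_le _ a).
  apply: le_trans; first exact: (bigmin_le _ b).
  by rewrite Dv.
move=> lb; rewrite /phi; apply: (big_ind (fun v => al <= v)) => //.
  by move=> u w hu hw; rewrite le_min hu hw.
move=> a _; apply: (big_ind (fun v => al <= v)) => //.
  by move=> u w hu hw; rewrite le_min hu hw.
by move=> b _; case Dv: (fder f y a b) => [v|] //; exact: lb Dv.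
Qed.

Lemma phi_lt0_dom (y : vec n) : phi f y < 0 -> exists v, f y = Some v.
Proof.
case Ey: (f y) => [v|]; first by exists v.
move=> phi_lt0; suff: 0 <= phi f y by rewrite leNgt phi_lt0.
by apply/phi_geP => // a b v; rewrite /fder Ey; case: (f _).
Qed.

Lemma slope_lb_shift al y fy c d w : slope_lb al y -> f y = Some fy ->
  f (shift y c d 1) = Some w ->
  fy + al <= w /\ (fder f y c d <> Some al -> fy + al < w).
Proof.
move=> lb Ey Ew; have Dcd := fderE Ey Ew; have lb_cd := lb _ _ _ Dcd.
split=> [|ne]; first lia.
have : w - fy <> al by move=> e; apply: ne; rewrite Dcd e.
lia.
Qed.

End Slopes.

Definition l1_dist n (x y : vec n) : int := \sum_k `|y k - x k|.

Lemma l1_dist_ge0 n (x y : vec n) : 0 <= l1_dist x y.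
Proof. by apply: sumr_ge0 => k _; exact: normr_ge0. Qed.

Lemma l1_dist_shift_lt n (x y : vec n) i j : x i < y i -> y j < x j ->
  l1_dist x (shift y j i 1) < l1_dist x y.
Proof.
move=> lti ltj; have nij : i != j by apply: contraTneq lti => ->; rewrite -leNgt ltW.
rewrite /l1_dist (bigD1 i) //= [X in _ < X](bigD1 i) //=.
apply: ltr_leD; first by rewrite shiftE eqxx (negbTE nij) !ger0_norm /=; lia.
apply: ler_sum => k nki; rewrite shiftE (negbTE nki).
by have [->|nkj] /= := eqVneq k j; [rewrite !ler0_norm | ]; lia.
Qed.

Section Exchange.
Variables (n : nat) (f : efun n).
Hypothesis fM : exchange_axiom f.

Lemma exchange_line p i j (t : nat) fp ft : i != j -> f p = Some fp ->
  f (shift p i j (t%:Z + 2)) = Some ft ->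
  exists A B, f (shift p i j (t%:Z + 1)) = Some A /\ f (shift p i j 1) = Some B /\
    A + B <= ft + fp.
Proof.
move=> nij Ep Et.
have [|||m [ltm [ft' [fp' [A [B [Et' [Ep' [EA [EB AB]]]]]]]]]] :=
  fM (x := shift p i j (t%:Z + 2)) (y := p) _ _ (i := i).
- by rewrite /in_dom Et.
- by rewrite /in_dom Ep.
- by rewrite !shiftE eqxx (negbTE nij) /=; lia.
have mj : m = j.
  apply/eqP; apply: contraTT ltm => nmj.
  by rewrite !shiftE (negbTE nmj); case: (m == i) => /=; lia.
subst m.
move: EA EB; have -> : shift (shift p i j (t%:Z + 2)) j i 1 = shift p i j (t%:Z + 1).
  by apply/ffunP => k; rewrite !shiftE; ring.
move: Et Ep; rewrite Et' Ep' => -[<-] [<-].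
by move=> EA EB; exists A, B.
Qed.

Lemma unit_slope_le_chord p i j fp : i != j -> f p = Some fp ->
  forall (t : nat) ft, f (shift p i j (t%:Z + 1)) = Some ft ->
  exists g, f (shift p i j 1) = Some g /\ (t%:Z + 1) * (g - fp) <= ft - fp.
Proof.
move=> nij Ep; elim=> [|t IH] ft Et.
  by exists ft; rewrite add0r in Et; split=> //; lia.
move: Et; have -> : t.+1%:Z + 1 = t%:Z + 2 by lia.
move=> /(exchange_line nij Ep) [A [B [EA [EB AB]]]].
have [g [Eg le_g]] := IH _ EA.
move: Eg le_g; rewrite EB => -[<-] le_B.
by exists B; split=> //; nia.
Qed.

Lemma exchange_two_steps y i j a b fy fz : a != b -> a != j -> f y = Some fy ->
  f (shift (shift y i j 1) a b 1) = Some fz ->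
  exists A B, A + B <= fz + fy /\
    (f (shift y i b 1) = Some A /\ f (shift y a j 1) = Some B \/
     f (shift y i j 1) = Some A /\ f (shift y a b 1) = Some B).
Proof.
move=> nab naj Ey Ez.
have [|||m [ltm [fz' [fy' [A [B [Ez' [Ey' [EA [EB AB]]]]]]]]]] :=
  fM (x := shift (shift y i j 1) a b 1) (y := y) _ _ (i := a).
- by rewrite /in_dom Ez.
- by rewrite /in_dom Ey.
- by rewrite !shiftE eqxx (negbTE nab) (negbTE naj) /=; case: (a == i) => /=; lia.
move: Ez Ey AB; rewrite Ez' Ey' => -[<-] [<-] AB.
exists A, B; split=> //.
have [mj|nmj] := eqVneq m j; first subst m.
  left; move: EA; have -> // : shift (shift (shift y i j 1) a b 1) j a 1 = shift y i b 1.
  by apply/ffunP => k; rewrite !shiftE; ring.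
have [mb|nmb] := eqVneq m b; first subst m.
  right; move: EA; have -> // : shift (shift (shift y i j 1) a b 1) b a 1 = shift y i j 1.
  by apply/ffunP => k; rewrite !shiftE; ring.
move: ltm; rewrite !shiftE (negbTE nmj) (negbTE nmb).
by case: (m == i); case: (m == a) => /=; lia.
Qed.

Lemma dom_neq_lt x y : in_dom f x -> in_dom f y -> y != x -> exists i, x i < y i.
Proof.
move=> Dx Dy nyx.
case: (boolP [exists i, x i < y i]) => [/existsP // | /existsPn le_yx].
have [i0 nyx0] : exists i0, y i0 != x i0.
  apply/existsP; apply: contraNT nyx => /existsPn eq_yx.
  by apply/eqP/ffunP => k; apply/eqP/negPn/eq_yx.
have lt0 : y i0 < x i0 by rewrite lt_neqAle nyx0 leNgt le_yx.
have [j [ltj _]] := fM Dx Dy lt0.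
by move: (le_yx j); rewrite ltj.
Qed.

Lemma slope_lb0_descent x fx y v : slope_lb f 0 x -> f x = Some fx ->
  f y = Some v -> y != x ->
  exists z w, f z = Some w /\ w <= v /\ l1_dist x z < l1_dist x y.
Proof.
move=> lb Ex Ey nyx.
have [||i lti] := dom_neq_lt (x := x) (y := y) _ _ nyx; rewrite /in_dom ?Ex ?Ey //.
have [||j [ltj [v' [fx' [A [B [Ey' [Ex' [EA [EB AB]]]]]]]]]] :=
  fM (x := y) (y := x) _ _ lti; rewrite /in_dom ?Ex ?Ey //.
move: Ey AB; rewrite Ey' => -[<-] AB.
have [fx_le_B _] := slope_lb_shift lb Ex' EB.
exists (shift y j i 1), A; split=> //; split; [lia | exact: l1_dist_shift_lt].
Qed.

Lemma phi_ge0_min x fx : 0 <= phi f x -> f x = Some fx ->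
  forall y v, f y = Some v -> fx <= v.
Proof.
move=> /(phi_geP _ _ (lexx 0)) lb Ex.
suff le_N (N : nat) y v : l1_dist x y <= N%:Z -> f y = Some v -> fx <= v.
  by move=> y v; apply: (le_N `|l1_dist x y|%N); rewrite abszE ler_norm.
elim: N y v => [|N IH] y v le_N Ey; have [yx|nyx] := eqVneq y x.
- by move: Ey; rewrite yx Ex => -[->].
- have [z [w [_ [_ lt_z]]]] := slope_lb0_descent lb Ex Ey nyx.
  by have := l1_dist_ge0 x z; lia.
- by move: Ey; rewrite yx Ex => -[->].
have [z [w [Ez [le_w lt_z]]]] := slope_lb0_descent lb Ex Ey nyx.
by apply: le_trans le_w; apply: IH Ez; lia.
Qed.

End Exchange.

Section SteepestMove.
Variables (n : nat) (f : efun n).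
Hypothesis fM : exchange_axiom f.
Variable al : int.
Hypothesis al_lt0 : al < 0.

Definition avoids_slope (G : 'I_n -> 'I_n -> Prop) (y : vec n) : Prop :=
  forall a b, G a b -> fder f y a b <> Some al.

Definition closed_under_move (G : 'I_n -> 'I_n -> Prop) (i j : 'I_n) : Prop :=
  forall a b, G a b -> a = i \/ G a j.

(* Exchange y + chi_i - chi_j + chi_a - chi_b with y at coordinate a. *)
Lemma steepest_unit_step y i j fy G : slope_lb f al y -> f y = Some fy ->
  f (shift y i j 1) = Some (fy + al) -> avoids_slope G y -> closed_under_move G i j ->
  slope_lb f al (shift y i j 1) /\ avoids_slope G (shift y i j 1).
Proof.
move=> lb Ey Ey' avG clG.
suff bound a b fz : f (shift (shift y i j 1) a b 1) = Some fz ->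
    fy + 2 * al <= fz /\ (G a b -> fy + 2 * al < fz).
  split=> [a b v | a b Gab] /fder_Some [w []]; rewrite Ey' => -[<-] /bound [le lt].
    lia.
  by have := lt Gab; lia.
move=> Ez; have [eab|nab] := eqVneq a b.
  by move: Ez; rewrite eab shiftii Ey' => -[<-]; lia.
have [eaj|naj] := eqVneq a j.
  move: Ez; have -> : shift (shift y i j 1) a b 1 = shift y i b 1.
    by apply/ffunP => k; rewrite eaj !shiftE; ring.
  by move=> /(slope_lb_shift lb Ey) [le _]; lia.
have [A [B [AB [[EA EB] | [EA EB]]]]] := exchange_two_steps fM nab naj Ey Ez.
  have [leA ltA] := slope_lb_shift lb Ey EA.
  have [leB ltB] := slope_lb_shift lb Ey EB.
  split=> [|Gab]; first lia.
  case: (clG _ _ Gab) => [ai|Gaj]; last by have := ltB (avG _ _ Gaj); lia.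
  move: Gab EB; rewrite ai Ey' => Gib -[eB].
  by have := ltA (avG _ _ Gib); lia.
move: EA AB; rewrite Ey' => -[<-] AB.
have [leB ltB] := slope_lb_shift lb Ey EB.
by split=> [|Gab]; [|have := ltB (avG _ _ Gab)]; lia.
Qed.

(* Convexity along the line squeezes the first unit step between the lower
   bound al and the average slope al of the chord. *)
Lemma chord_unit_step p i j (t : nat) fp : i != j -> slope_lb f al p -> f p = Some fp ->
  f (shift p i j (t%:Z + 1)) = Some (fp + (t%:Z + 1) * al) ->
  f (shift p i j 1) = Some (fp + al).
Proof.
move=> nij lb Ep Et.
have [g [Eg le_g]] := unit_slope_le_chord fM nij Ep Et.
have [lb_g _] := slope_lb_shift lb Ep Eg.
by rewrite Eg; congr Some; nia.
Qed.

Lemma steepest_segment y i j c fy G : slope_lb f al y -> f y = Some fy ->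
  fder f y i j = Some al -> is_cbar f y i j c ->
  avoids_slope G y -> closed_under_move G i j ->
  [/\ slope_lb f al (shift y i j c), avoids_slope G (shift y i j c),
      f (shift y i j c) = Some (fy + c * al), 1 <= c &
      fder f (shift y i j c) i j <> Some al].
Proof.
move=> lb Ey Dij [c_ge0 [[fy' [d [Ey' [Dij' Ec]]]] c_max]] avG clG.
move: Ey' Dij' Ec; rewrite Ey Dij => -[<-] -[<-] Ec.
have nij : i != j.
  by apply/eqP => eij; move: Dij; rewrite eij (fderii _ Ey) => -[]; lia.
have step_okP (s : int) : f (shift y i j s) = Some (fy + s * al) -> step_ok f y i j s.
  by exists fy, al.
have c_ge1 : 1 <= c.
  apply: c_max => //; apply: step_okP; rewrite mul1r.
  by have [w []] := fder_Some Dij; rewrite Ey => -[<-].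
case: c c_ge0 c_ge1 Ec c_max => [cn|//] _ c_ge1 Ec c_max.
have inv (s : nat) : (s <= cn)%N -> [/\ slope_lb f al (shift y i j s),
    avoids_slope G (shift y i j s) & f (shift y i j s) = Some (fy + s%:Z * al)].
  elim: s => [|s IH] le_s; first by rewrite shift0 mul0r addr0.
  have [lb_s avG_s E_s] := IH (ltnW le_s).
  have E1 : f (shift (shift y i j s) i j 1) = Some (fy + s%:Z * al + al).
    apply: (chord_unit_step (t := (cn - s.+1)%N)) nij lb_s E_s _.
    have -> : (cn - s.+1)%N%:Z + 1 = cn%:Z - s%:Z by lia.
    by rewrite shiftD addrC subrK Ec; congr Some; ring.
  have [lb' avG'] := steepest_unit_step lb_s E_s E1 avG_s clG.
  move: lb' avG' E1; rewrite shiftD; have -> : s%:Z + 1 = s.+1 by lia.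
  by move=> lb' avG' E1; split=> //; rewrite E1; congr Some; lia.
have [lb_c avG_c E_c] := inv cn (leqnn cn).
split=> // /fder_Some [w []]; rewrite E_c => -[<-]; rewrite shiftD => E_c1.
have : cn%:Z + 1 <= cn by apply: c_max; [lia | apply: step_okP; rewrite E_c1; congr Some; lia].
lia.
Qed.

End SteepestMove.

Section IncSlopeRun.
Variables (n : nat) (f : efun n).
Hypothesis fM : exchange_axiom f.
Variable al : int.
Hypothesis al_lt0 : al < 0.
Variable (x : vec n) (fx : int).

(* The alternative [y = x] covers the case where no move has been made yet. *)
Definition descent_inv (G : 'I_n -> 'I_n -> Prop) (y : vec n) : Prop :=
  [/\ slope_lb f al y,
      exists fy, f y = Some fy /\ fy <= fx /\ (y = x \/ fy <= fx + al)
    & avoids_slope f al G y].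

(* Pairs already inspected: the rows in P, and the columns J of row i. *)
Definition done_pairs (P : seq 'I_n) (i : 'I_n) (J : seq 'I_n) (a b : 'I_n) : Prop :=
  a \in P \/ (a = i /\ b \in J).

Lemma avoids_done_rcons P i J j z : avoids_slope f al (done_pairs P i J) z ->
  fder f z i j <> Some al -> avoids_slope f al (done_pairs P i (rcons J j)) z.
Proof.
move=> avz nDz a b [aP | [-> ]]; first by apply: avz; left.
by rewrite mem_rcons in_cons => /orP [/eqP -> // | bJ]; apply: avz; right.
Qed.

Lemma inner_run_inv P i js J y y' : inner_run f al i js y y' ->
  descent_inv (done_pairs P i J) y -> descent_inv (done_pairs P i (J ++ js)) y'.
Proof.
elim: js J y => [|j js IH] J y /=; first by move=> ->; rewrite cats0.
move=> [y1 [step run]] [lb [fy [Ey [le_fx moved]]] avG].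
rewrite -cat_rcons; apply: (IH _ y1 run).
move: step; case: eqP => [Dij [c [cbar ->]] | nDij ->]; last first.
  by split=> //; [exists fy | exact: avoids_done_rcons].
have clG : closed_under_move (done_pairs P i J) i j.
  by move=> a b [aP | [ai _]]; [right; left | left].
have [lb' avG' E' c_ge1 nD'] := steepest_segment fM al_lt0 lb Ey Dij cbar avG clG.
split=> //; last exact: avoids_done_rcons.
by exists (fy + c * al); split=> //; split; [nia | right; nia].
Qed.

Lemma outer_run_inv js : (forall i, perm_eq (js i) [seq j <- enum 'I_n | j != i]) ->
  forall ord P y y', outer_run f al ord js y y' ->
  descent_inv (fun a _ => a \in P) y -> descent_inv (fun a _ => a \in P ++ ord) y'.
Proof.
move=> js_perm; elim=> [|i ord IH] P y y' /=; first by move=> ->; rewrite cats0.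
move=> [y1 [inner outer]] [lb Dy avG]; rewrite -cat_rcons; apply: (IH _ y1 _ outer).
have inv0 : descent_inv (done_pairs P i [::]) y.
  by split=> // a b [aP | [_ //]]; apply: avG.
have [lb1 [fy1 [Ey1 Dy1]] avG1] := inner_run_inv inner inv0.
split=> //; first by exists fy1.
move=> a b; rewrite mem_rcons in_cons => /orP [/eqP -> | aP]; last by apply: avG1; left.
have [-> | nbi] := eqVneq b i; first by rewrite (fderii _ Ey1) => -[]; lia.
by apply: avG1; right; split=> //; rewrite (perm_mem (js_perm i)) mem_filter mem_enum nbi.
Qed.

End IncSlopeRun.

Lemma IncSlope_progress n (f : efun n) x y : exchange_axiom f ->
  phi f x < 0 -> M_IncSlope f x y ->
  exists fx fy, [/\ f x = Some fx, f y = Some fy, fy <= fx + phi f x &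
                    phi f x + 1 <= phi f y].
Proof.
move=> fM phi_lt0 [ord [js [ord_perm [js_perm run]]]].
have [fx Ex] := phi_lt0_dom phi_lt0.
have inv0 : descent_inv f (phi f x) x fx (fun a _ => a \in [::]) x.
  split=> [||//]; first exact/(phi_geP _ _ (ltW phi_lt0)).
  by exists fx; split=> //; split=> //; left.
have [lb_y [fy [Ey [_ moved]]] avG] := outer_run_inv fM phi_lt0 js_perm run inv0.
have phi_inc : phi f x + 1 <= phi f y.
  have phi_inc_le0 : phi f x + 1 <= 0 by lia.
  apply/(phi_geP _ _ phi_inc_le0) => a b v Dv.
  have : v <> phi f x.
    by move=> e; apply: (avG a b); rewrite ?Dv ?e //= (perm_mem ord_perm) mem_enum.
  by have := lb_y _ _ _ Dv; lia.
exists fx, fy; split=> //; case: moved => [eyx | //].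
by move: phi_inc; rewrite eyx; lia.
Qed.

Lemma quadratic_descent (v p : nat -> int) (k : nat) :
  (forall t, (t < k)%N -> v t.+1 <= v t + p t /\ p t + 1 <= p t.+1) -> p k = 0 ->
  (k * k)%:Z <= 2 * (v 0%N - v k).
Proof.
move=> step pk.
have p_le d t : (t + d = k)%N -> p t + d%:Z <= 0.
  elim: d t => [|d IH] t ek; first by move: pk; rewrite -ek addn0 => ->.
  have [_ inc] : v t.+1 <= v t + p t /\ p t + 1 <= p t.+1 by apply: step; lia.
  by have := IH t.+1 (etrans (addSnnS t d) ek); lia.
have v_le t : (t <= k)%N -> t%:Z * (2 * k%:Z - t%:Z + 1) <= 2 * (v 0%N - v t).
  elim: t => [|t IH] le_t; first lia.
  have [dec _] := step t le_t.
  have := p_le (k - t)%N t (subnKC (ltnW le_t)); have := IH (ltnW le_t); nia.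
by have := v_le k (leqnn k); nia.
Qed.


Theorem mainTheorem6 (n : nat) (f : efun n) (x0 : vec n) (k : nat) :
  M_convex f -> bounded_dom f -> in_dom f x0 ->
  LSD2_run f x0 k ->
  exists (xmin : vec n) (fx0 fmin : int),
    f x0 = Some fx0 /\ f xmin = Some fmin /\
    (forall x (v : int), f x = Some v -> fmin <= v) /\
    ((k * k)%:Z <= 2 * (fx0 - fmin)).
Proof.
(* Boundedness of dom f only ensures termination, which LSD2_run provides. *)
move=> /M_convex_exchange fM _ x0_dom [xs [xs0 [run phi_k]]].
pose v t := odflt 0 (f (xs t)).
have progress t : (t < k)%N -> [/\ f (xs t.+1) = Some (v t.+1),
    v t.+1 <= v t + phi f (xs t) & phi f (xs t) + 1 <= phi f (xs t.+1)].
  move=> lt_t; have [phi_lt0 inc] := run t lt_t.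
  have [fa [fb [Ea Eb dec inc']]] := IncSlope_progress fM phi_lt0 inc.
  by rewrite /v Ea Eb.
have Ev t : (t <= k)%N -> f (xs t) = Some (v t).
  case: t => [_|t lt_t]; last by have [] := progress t lt_t.
  by move: x0_dom; rewrite /in_dom /v xs0; case: (f x0).
exists (xs k), (v 0%N), (v k); rewrite -xs0.
split; [exact: Ev | split; [exact: Ev | split]].
  have phi_k_ge0 : 0 <= phi f (xs k) by rewrite phi_k.
  exact: (phi_ge0_min fM phi_k_ge0 (Ev k (leqnn k))).
apply: (quadratic_descent (p := fun t => phi f (xs t))) phi_k => t lt_t.
by have [] := progress t lt_t.
Qed.
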